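(* Let $n\ge1$, $H,K\le S_n$, $\phi:H\to\mathbb C$, $\psi:K\to\mathbb C$ arbitrary functions, and let $Y\subseteq\mathbb S_n(\mathbb C)$ be a set of symmetric matrices with $S_\sigma\in Y$ for every $\sigma\in S_n$. Then $d_\phi^H(A)=d_\psi^K(A)$ for all $A\in Y$ if and only if $d_\phi^H(S_\sigma)=d_\psi^K(S_\sigma)$ for all $\sigma\in S_n$.
   Context: $\mathbb S_n(\mathbb C)$ is the set of complex symmetric $n\times n$ matrices. For $G\le S_n$ and $\chi:G\to\mathbb C$, $\hat\chi$ is the extension of $\chi$ by $0$ outside $G$ and $d_\chi^G(A)=\sum_{\sigma\in S_n}\hat\chi(\sigma)\prod_{i=1}^n A_{i\,\sigma(i)}$. For $\sigma\in S_n$, $S_\sigma$ is the $n\times n$ $0/1$ matrix with $(S_\sigma)_{ij}=1$ iff $\sigma(i)=j$ or $\sigma^{-1}(i)=j$. *)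

From HB Require Import structures.
From mathcomp Require Import all_boot all_order all_algebra all_fingroup.
Set Implicit Arguments. Unset Strict Implicit. Unset Printing Implicit Defensive.
Import Order.TTheory GRing.Theory Num.Theory.
Local Open Scope ring_scope.

Definition ext_chi (C : nzRingType) (n : nat) (G : {set 'S_n})
  (chi : 'S_n -> C) (s : 'S_n) : C :=
  if s \in G then chi s else 0.

Definition gmf (C : comNzRingType) (n : nat) (G : {set 'S_n})
  (chi : 'S_n -> C) (A : 'M[C]_n) : C :=
  \sum_(s : 'S_n) ext_chi G chi s * \prod_(i < n) A i (s i).

Definition Smat (C : nzRingType) (n : nat) (s : 'S_n) : 'M[C]_n :=
  \matrix_(i, j) (if (s i == j) || ((s^-1)%g i == j) then 1 else 0).

From HB Require Import structures.
From mathcomp Require Import all_boot all_order all_algebra all_fingroup.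
Import GRing.Theory.
Local Open Scope ring_scope.
Set Implicit Arguments. Unset Strict Implicit.

(* Put f := phi-hat - psi-hat and let E(s) be the support of S_s, the edge
   set of the undirected functional graph of s.  For symmetric A the monomial
   prod_i A_(i, s i) only depends on E(s): row i of E(s) is {s i, s^-1 i}, which
   determines how often each unordered pair {i, j} occurs as {i, s i}.  Hence
   d_phi^H(A) - d_psi^K(A) is a combination of the fibre sums
   sum_(E s = X) f s.  Evaluating at S_t gives sum_(E s \subset E t) f s = 0
   for every t, and Moebius inversion along inclusion of supports (induction on
   |X|) makes every fibre sum vanish. *)


Section FiberSums.

Variables (T U : finType) (E : T -> {set U}).

Lemma fiber_sum_eq0 (R : nmodType) (f : T -> R) :
  (forall t, \sum_(r | E r \subset E t) f r = 0) ->
  forall X, \sum_(r | E r == X) f r = 0.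
Proof.
move=> hf X; have [m leXm] := ubnP #|X|; elim: m X leXm => // m IHm X leXm.
case: (pickP [pred t | E t == X]) => [t /eqP EtX | noX]; last first.
  by rewrite big_pred0.
have fiberE (Y : {set U}) : Y \subset X ->
    \sum_(r | (E r \subset X) && (E r == Y)) f r = \sum_(r | E r == Y) f r.
  by move=> sYX; apply: eq_bigl => r; rewrite andb_idl // => /eqP->.
have := hf t; rewrite EtX (partition_big E (fun Y => Y \subset X)) //=.
rewrite (bigD1 X) //= fiberE // [Z in _ + Z]big1 ?addr0 // => Y /andP[sYX nYX].
rewrite fiberE // IHm // -ltnS (leq_trans _ leXm) // ltnS proper_card //.
by rewrite properEneq nYX.
Qed.

Lemma fiber_const_sum_eq0 (R : pzSemiRingType) (f g : T -> R) :
  (forall t, \sum_(r | E r \subset E t) f r = 0) ->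
  (forall r s, E r = E s -> g r = g s) ->
  \sum_r f r * g r = 0.
Proof.
move=> hf hg; rewrite (partition_big E xpredT) //= big1 // => X _.
case: (pickP [pred t | E t == X]) => [t /eqP EtX | noX]; last first.
  by rewrite big_pred0.
rewrite (eq_bigr (fun r => f r * g t)) => [|r /eqP ErX]; last first.
  by rewrite (hg r t) // EtX.
by rewrite -mulr_suml fiber_sum_eq0 ?mul0r.
Qed.

End FiberSums.

Section SquareProducts.

Variables (R : Type) (idx : R) (op : Monoid.com_law idx).

Lemma big_ord_square n (F : 'I_n -> 'I_n -> R) :
  \big[op/idx]_(i < n) \big[op/idx]_(j < n) F i j =
  op (\big[op/idx]_(i < n) \big[op/idx]_(j < n | (i < j)%N) op (F i j) (F j i))
     (\big[op/idx]_(i < n) F i i).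
Proof.
have splitF i : \big[op/idx]_(j < n) F i j =
    op (op (\big[op/idx]_(j < n | (i < j)%N) F i j)
           (\big[op/idx]_(j < n | (j < i)%N) F i j)) (F i i).
  rewrite (bigD1 i) //= Monoid.mulmC (bigID (fun j : 'I_n => (i < j)%N)) /=.
  congr (op (op _ _) _); apply: eq_bigl => j.
    by rewrite andb_idl // => ltij; rewrite neq_ltn ltij orbT.
  by rewrite -leqNgt ltn_neqAle andbC eq_sym -val_eqE.
under eq_bigr do rewrite splitF.
rewrite !big_split /=; congr (op _ _).
rewrite [X in op _ X](exchange_big_dep xpredT) //= -big_split /=.
by apply: eq_bigr => i _; rewrite -big_split.
Qed.

End SquareProducts.

Definition perm_edges n (s : 'S_n) : {set 'I_n * 'I_n} :=
  [set ij | (s ij.1 == ij.2) || (s ij.2 == ij.1)].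

Lemma mem_perm_edges n (s : 'S_n) i j :
  ((i, j) \in perm_edges s) = (s i == j) || (s j == i).
Proof. by rewrite inE. Qed.

Lemma perm_edgesC n (s : 'S_n) i j :
  ((j, i) \in perm_edges s) = ((i, j) \in perm_edges s).
Proof. by rewrite !mem_perm_edges orbC. Qed.

Lemma perm_edges_subset n (r t : 'S_n) :
  (perm_edges r \subset perm_edges t) = [forall i, (i, r i) \in perm_edges t].
Proof.
apply/subsetP/forallP => [rt i | rt [i j]].
  by apply: rt; rewrite mem_perm_edges eqxx.
rewrite mem_perm_edges => /orP[/eqP <- | /eqP <-]; first exact: rt.
by rewrite perm_edgesC; apply: rt.
Qed.

Lemma Smat_perm_edges (C : nzRingType) n (s : 'S_n) i j :
  Smat C s i j = if (i, j) \in perm_edges s then 1 else 0.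
Proof. by rewrite mxE mem_perm_edges (canF_eq (permKV s)) [i == _]eq_sym. Qed.

Lemma prod_Smat (C : comNzRingType) n (r t : 'S_n) :
  \prod_(i < n) Smat C t i (r i) =
  if perm_edges r \subset perm_edges t then 1 else 0.
Proof.
rewrite perm_edges_subset; case: forallP => [rt | /forallP/forallPn [i nrt]].
  by apply: big1 => i _; rewrite Smat_perm_edges rt.
by rewrite (bigD1 i) //= Smat_perm_edges (negbTE nrt) mul0r.
Qed.

Lemma eq_count_pair (T : eqType) (a b c d x : T) :
  (forall y, (y == a) || (y == b) = (y == c) || (y == d)) ->
  ((a == x) + (b == x) = (c == x) + (d == x))%N.
Proof.
move=> abcd; have : (c == a) || (c == b) by rewrite abcd eqxx.
have : (d == a) || (d == b) by rewrite abcd eqxx orbT.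
case/orP=> /eqP dE /orP[/eqP cE | /eqP cE]; subst c d => //.
- by have := abcd b; rewrite eqxx orbT orbb => /esym/eqP->.
- exact: addnC.
- by have := abcd a; rewrite eqxx orbb => /esym/eqP->.
Qed.

Lemma perm_edges_count n (r s : 'S_n) :
  perm_edges r = perm_edges s ->
  forall i j, ((r i == j) + (r j == i) = (s i == j) + (s j == i))%N.
Proof.
move=> rs i j; rewrite (canF_eq (permK r) j) (canF_eq (permK s) j).
rewrite [j == _]eq_sym [j == _]eq_sym.
(* Row i of the support is {r i, r^-1 i} = {s i, s^-1 i}. *)
apply: eq_count_pair => y; have := congr1 (fun E : {set _} => (i, y) \in E) rs.
rewrite !mem_perm_edges (canF_eq (permK r) y) (canF_eq (permK s) y).
by rewrite [r i == y]eq_sym [s i == y]eq_sym.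
Qed.

Lemma perm_edges_fix n (r s : 'S_n) i :
  perm_edges r = perm_edges s -> (r i == i) = (s i == i).
Proof.
by move=> /perm_edges_count/(_ i i); case: (r i == i); case: (s i == i).
Qed.

Lemma prod_perm_sym (C : comPzRingType) n (A : 'M[C]_n) (s : 'S_n) :
  A^T = A ->
  \prod_(i < n) A i (s i) =
  \prod_(i < n) \prod_(j < n | (i < j)%N) A i j ^+ ((s i == j) + (s j == i))
  * \prod_(i < n) A i i ^+ (s i == i).
Proof.
move=> symA; have Aji i j : A j i = A i j by rewrite -{1}symA mxE.
have -> : \prod_(i < n) A i (s i) = \prod_(i < n) \prod_(j < n) A i j ^+ (s i == j).
  apply: eq_bigr => i _; rewrite (bigD1 (s i)) //= eqxx big1 ?mulr1 // => j.
  by rewrite eq_sym => /negbTE->; rewrite expr0.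
rewrite big_ord_square; congr (_ * _); apply: eq_bigr => i _.
by apply: eq_bigr => j _; rewrite exprD Aji.
Qed.

Lemma prod_perm_edges_eq (C : comPzRingType) n (A : 'M[C]_n) (r s : 'S_n) :
  A^T = A -> perm_edges r = perm_edges s ->
  \prod_(i < n) A i (r i) = \prod_(i < n) A i (s i).
Proof.
move=> symA rs; rewrite !prod_perm_sym //; congr (_ * _); apply: eq_bigr => i _.
  by apply: eq_bigr => j _; rewrite (perm_edges_count rs).
by rewrite (perm_edges_fix i rs).
Qed.

Lemma gmf_subE (C : comNzRingType) n (H K : {set 'S_n}) (phi psi : 'S_n -> C)
    (A : 'M[C]_n) :
  gmf H phi A - gmf K psi A =
  \sum_(s : 'S_n) (ext_chi H phi s - ext_chi K psi s) * \prod_(i < n) A i (s i).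
Proof. by rewrite /gmf -sumrB; apply: eq_bigr => s _; rewrite mulrBl. Qed.

Theorem mainTheorem7 (C : numClosedFieldType) (n : nat) (hn : (0 < n)%N)
  (H K : {group 'S_n}) (phi psi : 'S_n -> C) (Y : 'M[C]_n -> Prop)
  (hYsym : forall A, Y A -> A^T = A)
  (hYS : forall s : 'S_n, Y (Smat C s)) :
  (forall A, Y A -> gmf H phi A = gmf K psi A) <->
  (forall s : 'S_n, gmf H phi (Smat C s) = gmf K psi (Smat C s)).
Proof.
split=> [eqY s | eqS A YA]; first exact: eqY _ (hYS s).
apply/eqP; rewrite -subr_eq0 gmf_subE; apply/eqP.
pose f s := ext_chi H phi s - ext_chi K psi s.
apply: (@fiber_const_sum_eq0 _ _ (@perm_edges n) _ f) => [t | r s]; last first.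
  exact: prod_perm_edges_eq (hYsym A YA).
have /eqP := eqS t; rewrite -subr_eq0 gmf_subE => /eqP tE.
rewrite -[RHS]tE big_mkcond; apply: eq_bigr => r _.
by rewrite prod_Smat; case: ifP; rewrite ?mulr1 ?mulr0.
Qed.
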